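(* Let $h=z+\sum_{l\ge1}h_l(x)z^{-l}$ and $k=z^2+\sum_{l\ge1}k_l(x)z^{-l}$ satisfy the Riccati system $$h_x+hk=z^3+h_1h+(h_2+k_1),\qquad k_x+k^2=-h_1k+h\,(2k_1-h_2+z^3)-(h_3-2k_2).$$ Then all coefficients $h_j$ ($j\ge3$) and $k_j$ ($j\ge3$) are uniquely determined as differential polynomials (in $x$) in the four functions $h_1,h_2,k_1,k_2$; in particular $h_3=h_1^2-h_{1x}-k_2$. Conversely, for arbitrary smooth $h_1,h_2,k_1,k_2$ there is a unique such pair $(h,k)$. Hence $\mathcal Q^2_3$ is identified with the space of matrices $$\mathcal U(\lambda)=\begin{pmatrix}0&0&1\\ \lambda+h_2+k_1&h_1&0\\ 2k_2-h_3&\lambda+2k_1-h_2&-h_1\end{pmatrix},\qquad \lambda=z^3,$$ parametrized by $(h_1,h_2,k_1,k_2)$.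
   Context: These are the equations characterizing, in the coordinates $h=H^{(1)}$, $k=H^{(2)}$ on $\mathcal Q_2$ (space variable $x=t_2$), the subspace $\mathcal Q^2_3$ of integral curves of the central-system flow $X_2$ lying in $\mathcal S_3=\{H: X_3(H)=0,\ H^{(3)}=z^3\}$. Here $z$ is a formal variable and identities are identities of formal Laurent series, compared coefficient by coefficient in powers of $z$. *)

From Stdlib Require Import Reals ZArith.
From Coquelicot Require Import Coquelicot.

Open Scope R_scope.

Definition smooth (f : R -> R) : Prop := forall (n : nat) (x : R), ex_derive_n f n x.

(** Formal Laurent series in z whose coefficients are functions of x:
    [a n x] is the coefficient of z^n, evaluated at the point x. *)
Definition ser := Z -> R -> R.

(** h = z + sum_{l>=1} hc l z^{-l}  (hc 0 is ignored) *)
Definition hser (hc : nat -> R -> R) : ser := fun n x =>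
  if Z.eqb n 1 then 1 else if Z.leb n (-1) then hc (Z.to_nat (- n)) x else 0.

(** k = z^2 + sum_{l>=1} kc l z^{-l}  (kc 0 is ignored) *)
Definition kser (kc : nat -> R -> R) : ser := fun n x =>
  if Z.eqb n 2 then 1 else if Z.leb n (-1) then kc (Z.to_nat (- n)) x else 0.

Definition zpow (m : Z) : ser := fun n _ => if Z.eqb n m then 1 else 0.
Definition sconst (f : R -> R) : ser := fun n x => if Z.eqb n 0 then f x else 0.
Definition sadd (a b : ser) : ser := fun n x => a n x + b n x.
Definition sopp (a : ser) : ser := fun n x => - a n x.
Definition ssub (a b : ser) : ser := sadd a (sopp b).
Definition sscal (f : R -> R) (a : ser) : ser := fun n x => f x * a n x.
Definition sderiv (a : ser) : ser := fun n x => Derive (a n) x.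

Fixpoint csum (f : nat -> R) (m : nat) : R :=
  match m with O => 0 | S m' => csum f m' + f m' end.

(** Product of two Laurent series [a], [b] whose coefficients vanish in
    degrees > da, resp. > db: the coefficient of z^n is the (finite) sum
    of a_i b_{n-i} over n - db <= i <= da. *)
Definition smul (da db : Z) (a b : ser) : ser := fun n x =>
  csum (fun t => a (da - Z.of_nat t)%Z x * b (n - da + Z.of_nat t)%Z x)
       (Z.to_nat (da + db - n + 1)).

Definition ser_eq (a b : ser) : Prop := forall n x, a n x = b n x.

(** The Riccati system
      h_x + h k = z^3 + h_1 h + (h_2 + k_1),
      k_x + k^2 = - h_1 k + h (2 k_1 - h_2 + z^3) - (h_3 - 2 k_2),
    compared coefficient by coefficient in powers of z.
    (deg h = 1, deg k = 2, deg (2k_1 - h_2 + z^3) = 3.) *)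
Definition riccati (hc kc : nat -> R -> R) : Prop :=
  let h := hser hc in
  let k := kser kc in
  ser_eq (sadd (sderiv h) (smul 1 2 h k))
         (sadd (zpow 3) (sadd (sscal (hc 1%nat) h)
               (sconst (fun x => hc 2%nat x + kc 1%nat x))))
  /\
  ser_eq (sadd (sderiv k) (smul 2 2 k k))
         (ssub (sadd (sopp (sscal (hc 1%nat) k))
                     (smul 1 3 h (sadd (sconst (fun x => 2 * kc 1%nat x - hc 2%nat x))
                                       (zpow 3))))
               (sconst (fun x => hc 3%nat x - 2 * kc 2%nat x))).

(** Differential polynomials in the four generators h1, h2, k1, k2
    (with real coefficients), as syntax: [DVar g m] is the m-th
    x-derivative of the generator g. *)
Inductive gen : Type := G_h1 | G_h2 | G_k1 | G_k2.

Inductive dpoly : Type :=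
  | DVar (g : gen) (m : nat)
  | DConst (c : R)
  | DAdd (p q : dpoly)
  | DMul (p q : dpoly).

Definition gens (h1 h2 k1 k2 : R -> R) (g : gen) : R -> R :=
  match g with G_h1 => h1 | G_h2 => h2 | G_k1 => k1 | G_k2 => k2 end.

Fixpoint deval (u : gen -> R -> R) (p : dpoly) (x : R) : R :=
  match p with
  | DVar g m => Derive_n (u g) m x
  | DConst c => c
  | DAdd p q => deval u p x + deval u q x
  | DMul p q => deval u p x * deval u q x
  end.

Definition is_solution (hc kc : nat -> R -> R) : Prop :=
  (forall l, (1 <= l)%nat -> smooth (hc l) /\ smooth (kc l)) /\ riccati hc kc.

From Stdlib Require Import Reals ZArith Lia Lra.
From Coquelicot Require Import Coquelicot.
Open Scope R_scope.

(** Comparing the coefficients of z^{-(M+1)} in the two Riccati equations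
    gives h_{M+3} + k_{M+2} = A_M and h_{M+4} - 2 k_{M+3} = B_M, where A_M and
    B_M only involve h_1, ..., h_{M+2}, k_1, ..., k_{M+1} and their
    derivatives; the equations in degrees >= 0 hold for any h, k of the
    prescribed shape.  Combining the first equation at M+1 with the second at
    M solves for k_{M+3} and h_{M+4}, so (h_1, h_2, k_1, k_2) determine
    everything recursively.  Running the same recursion on formal differential
    polynomials produces the universal expressions, and evaluating them at
    arbitrary smooth generators produces a solution. *)

(** * Differential polynomials *)

Fixpoint dderiv (p : dpoly) : dpoly :=
  match p with
  | DVar g m => DVar g (S m)
  | DConst _ => DConst 0
  | DAdd p q => DAdd (dderiv p) (dderiv q)
  | DMul p q => DAdd (DMul (dderiv p) q) (DMul p (dderiv q))
  end.

Fixpoint dderiv_n (n : nat) (p : dpoly) : dpoly :=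
  match n with O => p | S n => dderiv (dderiv_n n p) end.

Definition dsub (p q : dpoly) : dpoly := DAdd p (DMul (DConst (-1)) q).

Fixpoint dsum (f : nat -> dpoly) (m : nat) : dpoly :=
  match m with O => DConst 0 | S m' => DAdd (dsum f m') (f m') end.

Lemma deval_dsum u f m x : deval u (dsum f m) x = csum (fun t => deval u (f t) x) m.
Proof. induction m as [|m IH]; simpl; [reflexivity|]. now rewrite IH. Qed.

Lemma dsum_ext f g m : (forall t, (t < m)%nat -> f t = g t) -> dsum f m = dsum g m.
Proof. induction m as [|m IH]; intro E; simpl; [reflexivity|]. rewrite IH, E; auto. Qed.

Section Evaluation.
Variables (u : gen -> R -> R) (u_smooth : forall g, smooth (u g)).

Lemma ex_derive_Derive_deval p x :
  ex_derive (deval u p) x /\ Derive (deval u p) x = deval u (dderiv p) x.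
Proof.
  revert x; induction p as [g m|c|p IHp q IHq|p IHp q IHq]; intro x.
  - split; [exact (u_smooth g (S m) x) | reflexivity].
  - split; [apply (@ex_derive_const R_AbsRing R_NormedModule) | apply (Derive_const c x)].
  - destruct (IHp x) as [Ep Dp], (IHq x) as [Eq Dq]; split.
    + now apply (@ex_derive_plus R_AbsRing R_NormedModule).
    + simpl; rewrite <- Dp, <- Dq; now apply Derive_plus.
  - destruct (IHp x) as [Ep Dp], (IHq x) as [Eq Dq]; split.
    + now apply ex_derive_mult.
    + simpl; rewrite <- Dp, <- Dq; now apply Derive_mult.
Qed.

Lemma Derive_deval p x : Derive (deval u p) x = deval u (dderiv p) x.
Proof. apply ex_derive_Derive_deval. Qed.

Lemma Derive_n_deval n p x : Derive_n (deval u p) n x = deval u (dderiv_n n p) x.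
Proof.
  revert x; induction n as [|n IH]; intro x; [reflexivity|].
  simpl; rewrite (Derive_ext _ _ x IH); apply Derive_deval.
Qed.

Lemma smooth_deval p : smooth (deval u p).
Proof.
  intros [|n] x; [exact I|]; simpl.
  apply (ex_derive_ext (deval u (dderiv_n n p))).
  - intro t; symmetry; apply Derive_n_deval.
  - apply ex_derive_Derive_deval.
Qed.

End Evaluation.

(** * Coefficients of the Riccati system *)

Lemma csum_ext f g m : (forall t, (t < m)%nat -> f t = g t) -> csum f m = csum g m.
Proof. induction m as [|m IH]; intro E; simpl; [reflexivity|]. rewrite IH, E; auto. Qed.

Lemma csumS_shift f m : csum f (S m) = f O + csum (fun t => f (S t)) m.
Proof. induction m as [|m IH]; [simpl; ring|]. cbn [csum] in *. rewrite IH; ring. Qed.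

Lemma csum_0 m : csum (fun _ => 0) m = 0.
Proof. induction m as [|m IH]; simpl; [reflexivity|]. rewrite IH; ring. Qed.

(** [conv f g M] is the part of the coefficient of z^{-(M+1)} in the product
    of f and g that involves only the tails: sum_{a+b=M+1, a,b>=1} f_a g_b. *)
Definition conv (f g : nat -> R -> R) (M : nat) (x : R) : R :=
  csum (fun t => f (S t) x * g (M - t)%nat x) M.

Section Coefficients.
Variables hc kc : nat -> R -> R.

Lemma hser_tail n N x : n = (- Z.of_nat N)%Z -> (1 <= N)%nat -> hser hc n x = hc N x.
Proof.
  intros -> HN; unfold hser.
  rewrite (proj2 (Z.eqb_neq _ _)), (proj2 (Z.leb_le _ _)) by lia; f_equal; lia.
Qed.

Lemma kser_tail n N x : n = (- Z.of_nat N)%Z -> (1 <= N)%nat -> kser kc n x = kc N x.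
Proof.
  intros -> HN; unfold kser.
  rewrite (proj2 (Z.eqb_neq _ _)), (proj2 (Z.leb_le _ _)) by lia; f_equal; lia.
Qed.

Lemma hser_lead n x : n = 1%Z -> hser hc n x = 1.
Proof. now intros ->. Qed.

Lemma kser_lead n x : n = 2%Z -> kser kc n x = 1.
Proof. now intros ->. Qed.

Lemma hser_nonneg n x : (0 <= n)%Z -> n <> 1%Z -> hser hc n x = 0.
Proof.
  intros; unfold hser.
  now rewrite (proj2 (Z.eqb_neq _ _)), (proj2 (Z.leb_gt _ _)) by lia.
Qed.

Lemma kser_nonneg n x : (0 <= n)%Z -> n <> 2%Z -> kser kc n x = 0.
Proof.
  intros; unfold kser.
  now rewrite (proj2 (Z.eqb_neq _ _)), (proj2 (Z.leb_gt _ _)) by lia.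
Qed.

Lemma zpow_eq m n x : n = m -> zpow m n x = 1.
Proof. intros ->; unfold zpow; now rewrite Z.eqb_refl. Qed.

Lemma zpow_neq m n x : n <> m -> zpow m n x = 0.
Proof. intros; unfold zpow; now rewrite (proj2 (Z.eqb_neq _ _)). Qed.

Lemma sconst_0 f n x : n = 0%Z -> sconst f n x = f x.
Proof. now intros ->. Qed.

Lemma sconst_neq0 f n x : n <> 0%Z -> sconst f n x = 0.
Proof. intros; unfold sconst; now rewrite (proj2 (Z.eqb_neq _ _)). Qed.

Lemma Derive_hser_nonneg n x : (0 <= n)%Z -> Derive (hser hc n) x = 0.
Proof.
  intro Hn; rewrite (Derive_ext _ (fun _ => hser hc n 0)); [apply Derive_const|].
  intro t; unfold hser; now rewrite (proj2 (Z.leb_gt _ _)) by lia.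
Qed.

Lemma Derive_kser_nonneg n x : (0 <= n)%Z -> Derive (kser kc n) x = 0.
Proof.
  intro Hn; rewrite (Derive_ext _ (fun _ => kser kc n 0)); [apply Derive_const|].
  intro t; unfold kser; now rewrite (proj2 (Z.leb_gt _ _)) by lia.
Qed.

Lemma Derive_hser_tail N x : Derive (hser hc (- Z.of_nat (S N))%Z) x = Derive (hc (S N)) x.
Proof. apply Derive_ext; intro; apply hser_tail; [reflexivity | lia]. Qed.

Lemma Derive_kser_tail N x : Derive (kser kc (- Z.of_nat (S N))%Z) x = Derive (kc (S N)) x.
Proof. apply Derive_ext; intro; apply kser_tail; [reflexivity | lia]. Qed.

(* The nat index of a tail coefficient is guessed among the shapes occurring
   in the coefficient lemmas below. *)
Ltac rewrite_tail lem n x M t :=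
  first [ rewrite (lem n (S M) x) by lia | rewrite (lem n (S (S M)) x) by lia
        | rewrite (lem n (S (S (S M))) x) by lia
        | rewrite (lem n (S (S (S (S M)))) x) by lia
        | rewrite (lem n (S t) x) by lia | rewrite (lem n (M - t)%nat x) by lia ].

Ltac eval_coefs M t :=
  repeat match goal with
  | |- context [hser hc ?n ?x] =>
      first [ rewrite (hser_lead n x) by lia | rewrite (hser_nonneg n x) by lia
            | rewrite_tail hser_tail n x M t ]
  | |- context [kser kc ?n ?x] =>
      first [ rewrite (kser_lead n x) by lia | rewrite (kser_nonneg n x) by lia
            | rewrite_tail kser_tail n x M t ]
  | |- context [zpow ?m ?n ?x] =>
      first [ rewrite (zpow_eq m n x) by lia | rewrite (zpow_neq m n x) by lia ]
  | |- context [sconst ?f ?n ?x] =>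
      first [ rewrite (sconst_0 f n x) by lia | rewrite (sconst_neq0 f n x) by lia ]
  end.

Definition lhs_h : ser := sadd (sderiv (hser hc)) (smul 1 2 (hser hc) (kser kc)).
Definition rhs_h : ser :=
  sadd (zpow 3) (sadd (sscal (hc 1%nat) (hser hc)) (sconst (fun x => hc 2%nat x + kc 1%nat x))).
Definition lhs_k : ser := sadd (sderiv (kser kc)) (smul 2 2 (kser kc) (kser kc)).
Definition rhs_k : ser :=
  ssub (sadd (sopp (sscal (hc 1%nat) (kser kc)))
             (smul 1 3 (hser hc) (sadd (sconst (fun x => 2 * kc 1%nat x - hc 2%nat x)) (zpow 3))))
       (sconst (fun x => hc 3%nat x - 2 * kc 2%nat x)).

Lemma riccati_sides : riccati hc kc <-> ser_eq lhs_h rhs_h /\ ser_eq lhs_k rhs_k.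
Proof. reflexivity. Qed.

Lemma lhs_h_tail M x : lhs_h (- Z.of_nat (S M))%Z x
  = Derive (hc (S M)) x + (kc (S (S M)) x + conv hc kc M x + hc (S (S (S M))) x).
Proof.
  unfold lhs_h, sadd, sderiv, smul; rewrite Derive_hser_tail; f_equal.
  replace (Z.to_nat _) with (S (S (S (S (S M))))) by lia.
  rewrite 2!csumS_shift; cbn [csum]; eval_coefs M M; unfold conv.
  rewrite (csum_ext _ (fun t => hc (S t) x * kc (M - t)%nat x)); [ring|].
  intros t Ht; eval_coefs M t; ring.
Qed.

Lemma rhs_h_tail M x : rhs_h (- Z.of_nat (S M))%Z x = hc 1%nat x * hc (S M) x.
Proof. unfold rhs_h, sadd, sscal; eval_coefs M M; ring. Qed.

Lemma lhs_k_tail M x : lhs_k (- Z.of_nat (S M))%Z x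
  = Derive (kc (S M)) x + (2 * kc (S (S (S M))) x + conv kc kc M x).
Proof.
  unfold lhs_k, sadd, sderiv, smul; rewrite Derive_kser_tail; f_equal.
  replace (Z.to_nat _) with (S (S (S (S (S (S M)))))) by lia.
  rewrite 3!csumS_shift; cbn [csum]; eval_coefs M M; unfold conv.
  rewrite (csum_ext _ (fun t => kc (S t) x * kc (M - t)%nat x)); [ring|].
  intros t Ht; eval_coefs M t; ring.
Qed.

Lemma rhs_k_tail M x : rhs_k (- Z.of_nat (S M))%Z x
  = - (hc 1%nat x * kc (S M) x)
    + (hc (S M) x * (2 * kc 1%nat x - hc 2%nat x) + hc (S (S (S (S M)))) x).
Proof.
  unfold rhs_k, ssub, sadd, sopp, sscal, smul.
  replace (Z.to_nat _) with (S (S (S (S (S (S M)))))) by lia.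
  rewrite 2!csumS_shift; cbn [csum]; eval_coefs M M.
  rewrite (csum_ext _ (fun _ => 0)), csum_0; [ring|].
  intros t Ht; eval_coefs M t; ring.
Qed.

Lemma riccati_h_nonneg n x : (0 <= n)%Z -> lhs_h n x = rhs_h n x.
Proof.
  intro Hn; unfold lhs_h, rhs_h, sadd, sderiv, sscal, smul; rewrite Derive_hser_nonneg by lia.
  assert (n = 0 \/ n = 1 \/ n = 2 \/ n = 3 \/ 4 <= n)%Z as [->|[->|[->|[->|H4]]]] by lia;
    try (simpl; eval_coefs O O; ring).
  replace (Z.to_nat _) with O by lia; simpl; eval_coefs O O; ring.
Qed.

Lemma riccati_k_nonneg n x : (0 <= n)%Z -> lhs_k n x = rhs_k n x.
Proof.
  intro Hn; unfold lhs_k, rhs_k, ssub, sadd, sopp, sderiv, sscal, smul.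
  rewrite Derive_kser_nonneg by lia.
  assert (n = 0 \/ n = 1 \/ n = 2 \/ n = 3 \/ n = 4 \/ 5 <= n)%Z
    as [->|[->|[->|[->|[->|H5]]]]] by lia; try (simpl; eval_coefs O O; ring).
  replace (Z.to_nat (2 + 2 - n + 1)) with O by lia.
  replace (Z.to_nat (1 + 3 - n + 1)) with O by lia; simpl; eval_coefs O O; ring.
Qed.

Definition coef_eq_h M x : Prop :=
  Derive (hc (S M)) x + (kc (S (S M)) x + conv hc kc M x + hc (S (S (S M))) x)
  = hc 1%nat x * hc (S M) x.

Definition coef_eq_k M x : Prop :=
  Derive (kc (S M)) x + (2 * kc (S (S (S M))) x + conv kc kc M x)
  = - (hc 1%nat x * kc (S M) x)
    + (hc (S M) x * (2 * kc 1%nat x - hc 2%nat x) + hc (S (S (S (S M)))) x).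

Lemma riccati_iff_coef_eqs : riccati hc kc <-> forall M x, coef_eq_h M x /\ coef_eq_k M x.
Proof.
  rewrite riccati_sides; split.
  - intros [Eh Ek] M x; unfold coef_eq_h, coef_eq_k.
    rewrite <- lhs_h_tail, <- rhs_h_tail, <- lhs_k_tail, <- rhs_k_tail; auto.
  - intros E; split; intros n x; (destruct (Z_lt_le_dec n 0) as [Hn|Hn];
      [replace n with (- Z.of_nat (S (Z.to_nat (- n) - 1)))%Z by lia|]).
    + rewrite lhs_h_tail, rhs_h_tail; apply E.
    + now apply riccati_h_nonneg.
    + rewrite lhs_k_tail, rhs_k_tail; apply E.
    + now apply riccati_k_nonneg.
Qed.

Definition Acoef M x : R :=
  hc 1%nat x * hc (S M) x - Derive (hc (S M)) x - conv hc kc M x.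

Definition Bcoef M x : R :=
  Derive (kc (S M)) x + conv kc kc M x + hc 1%nat x * kc (S M) x
  - (2 * kc 1%nat x - hc 2%nat x) * hc (S M) x.

Definition riccati_recursion : Prop :=
  (forall x, hc 3%nat x = Acoef 0 x - kc 2%nat x) /\
  (forall m x, kc (m + 3)%nat x = / 3 * (Acoef (S m) x - Bcoef m x) /\
               hc (m + 4)%nat x = Acoef (S m) x - kc (m + 3)%nat x).

(* coef_eq_h (S m) and coef_eq_k m form a linear system in h_{m+4}, k_{m+3}. *)
Lemma coef_eqs_iff_recursion :
  (forall M x, coef_eq_h M x /\ coef_eq_k M x) <-> riccati_recursion.
Proof.
  unfold riccati_recursion, Acoef, Bcoef; split.
  - intros E; split.
    + intro x; destruct (E O x) as [E0 _]; unfold coef_eq_h in E0; lra.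
    + intros m x; replace (m + 3)%nat with (S (S (S m))) by lia.
      replace (m + 4)%nat with (S (S (S (S m)))) by lia.
      destruct (E (S m) x) as [Eh _], (E m x) as [_ Ek]; unfold coef_eq_h, coef_eq_k in *.
      split; lra.
  - intros [E3 E] M x.
    assert (Estep : forall m, coef_eq_k m x /\ coef_eq_h (S m) x).
    { intro m; unfold coef_eq_h, coef_eq_k; destruct (E m x) as [Ek Eh].
      replace (m + 3)%nat with (S (S (S m))) in * by lia.
      replace (m + 4)%nat with (S (S (S (S m)))) in * by lia; split; lra. }
    destruct M as [|M]; split; try apply Estep.
    unfold coef_eq_h; specialize (E3 x); lra.
Qed.

End Coefficients.

(** * Universal differential polynomials *)

Definition dconv (H K : nat -> dpoly) (M : nat) : dpoly :=
  dsum (fun t => DMul (H (S t)) (K (M - t)%nat)) M.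

Definition dA (H K : nat -> dpoly) (M : nat) : dpoly :=
  dsub (dsub (DMul (H 1%nat) (H (S M))) (dderiv (H (S M)))) (dconv H K M).

Definition dB (H K : nat -> dpoly) (M : nat) : dpoly :=
  dsub (DAdd (DAdd (dderiv (K (S M))) (dconv K K M)) (DMul (H 1%nat) (K (S M))))
       (DMul (dsub (DMul (DConst 2) (K 1%nat)) (H 2%nat)) (H (S M))).

Section Realization.
Variables (u : gen -> R -> R) (u_smooth : forall g, smooth (u g)).
Variables (hc kc : nat -> R -> R) (H K : nat -> dpoly).

Lemma deval_dA M x :
  (forall i, (1 <= i <= S M)%nat -> forall x, hc i x = deval u (H i) x) ->
  (forall i, (1 <= i <= M)%nat -> forall x, kc i x = deval u (K i) x) ->
  deval u (dA H K M) x = Acoef hc kc M x.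
Proof.
  intros EH EK; unfold dA, dsub, dconv, Acoef, conv; cbn [deval].
  rewrite deval_dsum, <- Derive_deval by exact u_smooth.
  rewrite (Derive_ext _ _ x (EH (S M) ltac:(lia))), !(EH 1%nat), (EH (S M)) by lia.
  rewrite (csum_ext (fun t => hc (S t) x * kc (M - t)%nat x)
                    (fun t => deval u (DMul (H (S t)) (K (M - t)%nat)) x)); [ring|].
  intros t Ht; cbn [deval]; rewrite EH, EK by lia; reflexivity.
Qed.

Lemma deval_dB M x :
  (forall i, (1 <= i <= S (S M))%nat -> forall x, hc i x = deval u (H i) x) ->
  (forall i, (1 <= i <= S M)%nat -> forall x, kc i x = deval u (K i) x) ->
  deval u (dB H K M) x = Bcoef hc kc M x.
Proof.
  intros EH EK; unfold dB, dsub, dconv, Bcoef, conv; cbn [deval].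
  rewrite deval_dsum, <- Derive_deval by exact u_smooth.
  rewrite (Derive_ext _ _ x (EK (S M) ltac:(lia))).
  rewrite (EH 1%nat), (EH 2%nat), (EH (S M)), (EK 1%nat), (EK (S M)) by lia.
  rewrite (csum_ext (fun t => kc (S t) x * kc (M - t)%nat x)
                    (fun t => deval u (DMul (K (S t)) (K (M - t)%nat)) x)); [ring|].
  intros t Ht; cbn [deval]; rewrite !EK by lia; reflexivity.
Qed.

End Realization.

Definition set_at (f : nat -> dpoly) (i : nat) (v : dpoly) : nat -> dpoly :=
  fun j => if Nat.eqb j i then v else f j.

Definition gen_h (j : nat) : dpoly :=
  match j with 1%nat => DVar G_h1 0 | 2%nat => DVar G_h2 0 | _ => DConst 0 end.

Definition gen_k (j : nat) : dpoly :=
  match j with 1%nat => DVar G_k1 0 | 2%nat => DVar G_k2 0 | _ => DConst 0 end.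

(* [tables m] is correct on the h-indices <= m+3 and the k-indices <= m+2. *)
Fixpoint tables (m : nat) : (nat -> dpoly) * (nat -> dpoly) :=
  match m with
  | O => (set_at gen_h 3 (dsub (dA gen_h gen_k 0) (gen_k 2)), gen_k)
  | S m => let (H, K) := tables m in
           let k := DMul (DConst (/ 3)) (dsub (dA H K (S m)) (dB H K m)) in
           (set_at H (m + 4) (dsub (dA H K (S m)) k), set_at K (m + 3) k)
  end.

Definition hpoly (j : nat) : dpoly := fst (tables j) j.
Definition kpoly (j : nat) : dpoly := snd (tables j) j.

Lemma tables_stable m d :
  (forall i, (i <= m + 3)%nat -> fst (tables (d + m)) i = fst (tables m) i) /\
  (forall i, (i <= m + 2)%nat -> snd (tables (d + m)) i = snd (tables m) i).
Proof.
  induction d as [|d [IH1 IH2]]; [split; reflexivity|]; simpl.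
  destruct (tables (d + m)) as [H' K']; simpl in IH1, IH2.
  split; intros i Hi; cbn [fst snd]; unfold set_at.
  - destruct (Nat.eqb_spec i (d + m + 4)); [lia | auto].
  - destruct (Nat.eqb_spec i (d + m + 3)); [lia | auto].
Qed.

Lemma tables_hpoly m j : (j <= m + 3)%nat -> fst (tables m) j = hpoly j.
Proof.
  intro Hj; unfold hpoly; destruct (Nat.le_ge_cases m j).
  - replace j with ((j - m) + m)%nat at 2 by lia; symmetry; apply tables_stable; lia.
  - replace m with ((m - j) + j)%nat at 1 by lia; apply tables_stable; lia.
Qed.

Lemma tables_kpoly m j : (j <= m + 2)%nat -> snd (tables m) j = kpoly j.
Proof.
  intro Hj; unfold kpoly; destruct (Nat.le_ge_cases m j).
  - replace j with ((j - m) + m)%nat at 2 by lia; symmetry; apply tables_stable; lia.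
  - replace m with ((m - j) + j)%nat at 1 by lia; apply tables_stable; lia.
Qed.

Lemma dA_ext H K H' K' M :
  (forall i, (i <= S M)%nat -> H i = H' i) -> (forall i, (i <= M)%nat -> K i = K' i) ->
  dA H K M = dA H' K' M.
Proof.
  intros EH EK; unfold dA, dconv; rewrite !EH by lia; f_equal.
  apply dsum_ext; intros t Ht; rewrite EH, EK by lia; reflexivity.
Qed.

Lemma dB_ext H K H' K' M :
  (forall i, (i <= S (S M))%nat -> H i = H' i) -> (forall i, (i <= S M)%nat -> K i = K' i) ->
  dB H K M = dB H' K' M.
Proof.
  intros EH EK; unfold dB, dconv; rewrite !EH, !EK by lia; do 3 f_equal.
  apply dsum_ext; intros t Ht; rewrite !EK by lia; reflexivity.
Qed.

Lemma hpoly_3 : hpoly 3 = dsub (dA hpoly kpoly 0) (kpoly 2).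
Proof. reflexivity. Qed.

Lemma tables_step m :
  kpoly (m + 3) = DMul (DConst (/ 3)) (dsub (dA hpoly kpoly (S m)) (dB hpoly kpoly m)) /\
  hpoly (m + 4) = dsub (dA hpoly kpoly (S m)) (kpoly (m + 3)).
Proof.
  rewrite <- (tables_kpoly (S m)), <- (tables_hpoly (S m)) by lia; simpl.
  assert (EH : forall i, (i <= m + 3)%nat -> fst (tables m) i = hpoly i) by apply tables_hpoly.
  assert (EK : forall i, (i <= m + 2)%nat -> snd (tables m) i = kpoly i) by apply tables_kpoly.
  destruct (tables m) as [H' K']; cbn [fst snd] in *; unfold set_at; rewrite !Nat.eqb_refl.
  rewrite (dA_ext H' K' hpoly kpoly), (dB_ext H' K' hpoly kpoly)
    by (intros; apply EH || apply EK; lia).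
  split; reflexivity.
Qed.

Lemma riccati_recursion_deval u : (forall g, smooth (u g)) ->
  riccati_recursion (fun j => deval u (hpoly j)) (fun j => deval u (kpoly j)).
Proof.
  intro u_smooth.
  pose proof (deval_dA u u_smooth (fun j => deval u (hpoly j)) (fun j => deval u (kpoly j))
                hpoly kpoly) as EA.
  pose proof (deval_dB u u_smooth (fun j => deval u (hpoly j)) (fun j => deval u (kpoly j))
                hpoly kpoly) as EB.
  split.
  - intro x; rewrite hpoly_3; unfold dsub; cbn [deval].
    rewrite EA by reflexivity; ring.
  - intros m x; destruct (tables_step m) as [Ek Eh].
    rewrite Eh at 1; rewrite Ek at 1; unfold dsub; cbn [deval].
    rewrite EA, EB by reflexivity; split; ring.
Qed.

Section Uniqueness.
Variables hc kc : nat -> R -> R.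
Let u := gens (hc 1%nat) (hc 2%nat) (kc 1%nat) (kc 2%nat).
Hypothesis gens_smooth : forall g, smooth (u g).
Hypothesis recursion : riccati_recursion hc kc.

Lemma recursion_determined_upto m :
  (forall i, (1 <= i <= m + 3)%nat -> forall x, hc i x = deval u (hpoly i) x) /\
  (forall i, (1 <= i <= m + 2)%nat -> forall x, kc i x = deval u (kpoly i) x).
Proof.
  destruct recursion as [E3 E].
  induction m as [|m [IHh IHk]].
  - assert (Ek : forall i, (1 <= i <= 2)%nat -> forall x, kc i x = deval u (kpoly i) x)
      by (intros [|[|[|i]]] Hi x; [lia | reflexivity | reflexivity | lia]).
    split; [|exact Ek].
    intros [|[|[|[|i]]]] Hi x; try lia; try reflexivity.
    rewrite E3, hpoly_3; unfold dsub; cbn [deval].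
    rewrite (deval_dA u gens_smooth hc kc hpoly kpoly 0 x)
      by (intros i Hi' ?; replace i with 1%nat by lia; reflexivity).
    rewrite (Ek 2%nat) by lia; ring.
  - destruct (tables_step m) as [Pk Ph].
    assert (EA : forall x, Acoef hc kc (S m) x = deval u (dA hpoly kpoly (S m)) x)
      by (intro; symmetry; apply deval_dA; auto; intros; apply IHh || apply IHk; lia).
    assert (EB : forall x, Bcoef hc kc m x = deval u (dB hpoly kpoly m) x)
      by (intro; symmetry; apply deval_dB; auto; intros; apply IHh || apply IHk; lia).
    assert (Ek : forall x, kc (m + 3)%nat x = deval u (kpoly (m + 3)) x).
    { intro x; rewrite (proj1 (E m x)), Pk, EA, EB; unfold dsub; cbn [deval]; ring. }
    split; intros i Hi x.
    + destruct (Nat.eq_dec i (m + 4)) as [->|]; [|apply IHh; lia].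
      rewrite (proj2 (E m x)), Ph, EA, Ek; unfold dsub; cbn [deval]; ring.
    + destruct (Nat.eq_dec i (m + 3)) as [->|]; [apply Ek | apply IHk; lia].
Qed.

Lemma recursion_determined i x : (1 <= i)%nat ->
  hc i x = deval u (hpoly i) x /\ kc i x = deval u (kpoly i) x.
Proof.
  intro Hi; destruct (recursion_determined_upto i) as [Eh Ek]; split; [apply Eh | apply Ek]; lia.
Qed.

End Uniqueness.

Lemma riccati_iff_recursion hc kc : riccati hc kc <-> riccati_recursion hc kc.
Proof. rewrite riccati_iff_coef_eqs; apply coef_eqs_iff_recursion. Qed.

Lemma solution_determined hc kc : is_solution hc kc ->
  forall i x, (1 <= i)%nat ->
  hc i x = deval (gens (hc 1%nat) (hc 2%nat) (kc 1%nat) (kc 2%nat)) (hpoly i) x /\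
  kc i x = deval (gens (hc 1%nat) (hc 2%nat) (kc 1%nat) (kc 2%nat)) (kpoly i) x.
Proof.
  intros [Hsmooth Hric]; apply recursion_determined; [|now apply riccati_iff_recursion].
  intros []; cbn [gens].
  - exact (proj1 (Hsmooth 1%nat ltac:(lia))).
  - exact (proj1 (Hsmooth 2%nat ltac:(lia))).
  - exact (proj2 (Hsmooth 1%nat ltac:(lia))).
  - exact (proj2 (Hsmooth 2%nat ltac:(lia))).
Qed.

Lemma deval_tables_solution u : (forall g, smooth (u g)) ->
  is_solution (fun j => deval u (hpoly j)) (fun j => deval u (kpoly j)).
Proof.
  intro u_smooth; split.
  - split; apply smooth_deval; exact u_smooth.
  - apply riccati_iff_recursion, riccati_recursion_deval, u_smooth.
Qed.

Theorem mainTheorem12 :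
  (exists P Q : nat -> dpoly,
     forall hc kc : nat -> R -> R, is_solution hc kc ->
       forall j : nat, (3 <= j)%nat -> forall x : R,
         hc j x = deval (gens (hc 1%nat) (hc 2%nat) (kc 1%nat) (kc 2%nat)) (P j) x /\
         kc j x = deval (gens (hc 1%nat) (hc 2%nat) (kc 1%nat) (kc 2%nat)) (Q j) x)
  /\
  (forall hc kc : nat -> R -> R, is_solution hc kc ->
     forall x : R, hc 3%nat x = (hc 1%nat x) ^ 2 - Derive (hc 1%nat) x - kc 2%nat x)
  /\
  (forall h1 h2 k1 k2 : R -> R,
     smooth h1 -> smooth h2 -> smooth k1 -> smooth k2 ->
     exists hc kc : nat -> R -> R,
       is_solution hc kc /\
       hc 1%nat = h1 /\ hc 2%nat = h2 /\ kc 1%nat = k1 /\ kc 2%nat = k2 /\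
       forall hc' kc' : nat -> R -> R,
         is_solution hc' kc' ->
         hc' 1%nat = h1 -> hc' 2%nat = h2 -> kc' 1%nat = k1 -> kc' 2%nat = k2 ->
         forall l : nat, (1 <= l)%nat -> forall x : R,
           hc' l x = hc l x /\ kc' l x = kc l x).
Proof.
  split; [|split].
  - exists hpoly, kpoly; intros hc kc Hsol j Hj x; apply solution_determined; auto; lia.
  - intros hc kc [_ Hric] x; destruct (proj1 (riccati_iff_recursion hc kc) Hric) as [E3 _].
    rewrite E3; unfold Acoef, conv; cbn [csum]; ring.
  - intros h1 h2 k1 k2 s1 s2 s3 s4.
    assert (u_smooth : forall g, smooth (gens h1 h2 k1 k2 g)) by (intros []; assumption).
    exists (fun j => deval (gens h1 h2 k1 k2) (hpoly j)),
           (fun j => deval (gens h1 h2 k1 k2) (kpoly j)).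
    split; [now apply deval_tables_solution|].
    do 4 (split; [reflexivity|]).
    intros hc' kc' Hsol' e1 e2 e3 e4 l Hl x.
    rewrite <- e1, <- e2, <- e3, <- e4; now apply solution_determined.
Qed.
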